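(* Let $\mathcal{P}\subset\mathbb{Q}^n$ be a finite point set whose position vectors span $\mathbb{R}^n$, and let $\mathbb{R}^n=W_1\oplus\cdots\oplus W_r$ be a decomposition into pairwise orthogonal subspaces. For $\ell\in[r]$ let $\mathrm{proj}_\ell$ denote orthogonal projection onto $W_\ell$ and $\mathcal{P}_\ell=\mathrm{proj}_\ell(\mathcal{P})$. Let $\pi$ be a permutation of $\mathcal{P}$. Then $\pi$ is a geometric automorphism of $\mathcal{P}$ such that $A_\pi(W_\ell)=W_\ell$ for each $\ell\in[r]$ if and only if $\pi$ is an induced geometric automorphism of each $\mathcal{P}_\ell$, $1\le\ell\le r$.
   Context: A geometric automorphism of a finite point set $\mathcal{Q}$ (in a Euclidean space) is a permutation $\sigma$ of $\mathcal{Q}$ with $\|q\|=\|\sigma(q)\|$ and $\|q-q'\|=\|\sigma(q)-\sigma(q')\|$ for all $q,q'\in\mathcal{Q}$. For $\mathcal{P}$ spanning $\mathbb{R}^n$ and $\pi$ a geometric automorphism of $\mathcal{P}$, $A_\pi$ is the unique orthogonal matrix with $A_\pi p=\pi(p)$ for all $p\in\mathcal{P}$. A subset $\Delta\subseteq\mathcal{P}$ is an $(\ell)$-equivalence class if $\Delta=\mathrm{proj}_\ell^{-1}(q)\cap\mathcal{P}$ for some $q\in\mathcal{P}_\ell$. A permutation $\pi$ of $\mathcal{P}$ respects $\mathcal{P}_\ell$ if it maps every $(\ell)$-equivalence class onto an $(\ell)$-equivalence class; it then induces the permutation $\pi_\ell$ of $\mathcal{P}_\ell$ given by $\pi_\ell(q)=\mathrm{proj}_\ell(\pi(\mathrm{proj}_\ell^{-1}(q)))$.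 $\pi$ is an induced geometric automorphism of $\mathcal{P}_\ell$ if $\pi$ respects $\mathcal{P}_\ell$ and $\pi_\ell$ is a geometric automorphism of $\mathcal{P}_\ell$. *)

From HB Require Import structures.
From mathcomp Require Import all_boot all_order all_fingroup all_algebra.
From mathcomp Require Import reals.
Set Implicit Arguments. Unset Strict Implicit. Unset Printing Implicit Defensive.
Import Order.TTheory GRing.Theory Num.Theory.
Local Open Scope ring_scope.

Section Defs.
Variables (R : realType) (n : nat).
Local Notation V := 'cV[R]_n.

Definition dotv (u v : V) : R := (u^T *m v) 0 0.
Definition vnorm (v : V) : R := Num.sqrt (dotv v v).

Definition rational_pt (v : V) : Prop := exists q : 'cV[rat]_n, v = map_mx ratr q.

Definition is_orth_proj (W : {vspace V}) (f : V -> V) : Prop :=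
  forall v, f v \in W /\ forall w, w \in W -> dotv (v - f v) w = 0.

(* A finite point set P = {p i | i < m} (p injective); a permutation of P is
   given by a permutation pi of the indices. *)
Definition geom_aut_idx m (p : 'I_m -> V) (pi : {perm 'I_m}) : Prop :=
  forall i j, vnorm (p (pi i)) = vnorm (p i) /\
              vnorm (p i - p j) = vnorm (p (pi i) - p (pi j)).

Definition geom_aut_on (Q : seq V) (sigma : V -> V) : Prop :=
  [/\ {in Q, forall q, sigma q \in Q}, {in Q &, injective sigma} &
      {in Q &, forall q q', vnorm q = vnorm (sigma q) /\
                            vnorm (q - q') = vnorm (sigma q - sigma q')}].

Definition eq_class m (p : 'I_m -> V) (f : V -> V) (q : V) : {set 'I_m} :=
  [set k | f (p k) == q].

Definition proj_set m (p : 'I_m -> V) (f : V -> V) : seq V :=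
  [seq f (p k) | k <- enum 'I_m].

Definition respects m (p : 'I_m -> V) (f : V -> V) (pi : {perm 'I_m}) : Prop :=
  forall q, q \in proj_set p f ->
    exists2 q', q' \in proj_set p f & pi @: eq_class p f q = eq_class p f q'.

(* induced map pi_f(q) = f(pi(f^{-1}(q) ∩ P)) (well defined when pi respects P_f) *)
Definition induced_map m (p : 'I_m -> V) (f : V -> V) (pi : {perm 'I_m}) (q : V) : V :=
  if [pick k | f (p k) == q] is Some k then f (p (pi k)) else q.

Definition induced_geom_aut m (p : 'I_m -> V) (f : V -> V) (pi : {perm 'I_m}) : Prop :=
  respects p f pi /\ geom_aut_on (proj_set p f) (induced_map p f pi).

End Defs.

From HB Require Import structures.
From mathcomp Require Import all_boot all_order all_fingroup all_algebra.
From mathcomp Require Import reals.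
From mathcomp Require Import lra.
Import Order.TTheory GRing.Theory Num.Theory.
Local Open Scope ring_scope.
Set Implicit Arguments. Unset Strict Implicit. Unset Printing Implicit Defensive.

(* A permutation [pi] of a spanning point set [P] preserving all inner products is
   realised by an orthogonal matrix [A] with [A P = P o pi] (equal Gram matrices).
   If [A] also preserves each [W_l], it commutes with [proj_l], so [proj_l (P o pi)
   = A (proj_l P)] and [pi] induces an isometry of every [P_l].  Conversely the
   induced automorphisms preserve the Gram matrices of the [proj_l P]; as the [W_l]
   form an orthogonal decomposition these add up to the Gram matrix of [P], which
   yields [A].  A vector [w = P d] of [W_l] has [proj_l' (P d) = 0] for [l' <> l];
   equal Gram matrices of [proj_l' P] and [proj_l' (P o pi)] carry this over to
   [proj_l' (A w) = 0], so [A W_l <= W_l], with equality since [A] is orthogonal. *)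

Section GramMatrices.
Variable R : realDomainType.

Lemma trmx_mul_self_eq0 k l (M : 'M[R]_(k, l)) : M^T *m M = 0 -> M = 0.
Proof.
move=> /matrixP MM0; apply/matrixP => i j; rewrite mxE; apply/eqP.
have := MM0 j j; rewrite !mxE => /eqP; rewrite psumr_eq0 => [|i' _].
  by move=> /allP/(_ i (mem_index_enum _)); rewrite mxE mulf_eq0 orbb.
by rewrite mxE -expr2 sqr_ge0.
Qed.

Lemma gram_mulmx_eq0 k1 k2 m l (P : 'M[R]_(k1, m)) (Q : 'M[R]_(k2, m))
    (D : 'M[R]_(m, l)) :
  P^T *m P = Q^T *m Q -> P *m D = 0 -> Q *m D = 0.
Proof.
move=> PQ PD0; apply: trmx_mul_self_eq0.
by rewrite trmx_mul mulmxA -(mulmxA D^T) -PQ mulmxA -mulmxA -trmx_mul PD0 mulmx0.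
Qed.

(* With [C] a right inverse of [P], the candidate is [A := Q C]; equal Gram
   matrices force [Q] to vanish wherever [P] does, in particular on [C P - 1]. *)
Lemma orthogonal_extension k n m (P : 'M[R]_(n, m)) (Q : 'M[R]_(k, m))
    (C : 'M[R]_(m, n)) :
  P *m C = 1%:M -> P^T *m P = Q^T *m Q ->
  exists A : 'M[R]_(k, n), A *m P = Q /\ A^T *m A = 1%:M.
Proof.
move=> PC PQ; exists (Q *m C); split.
  apply/eqP; rewrite -subr_eq0 -mulmxA -{2}[Q]mulmx1 -mulmxBr; apply/eqP.
  by apply: (gram_mulmx_eq0 PQ); rewrite mulmxBr mulmxA PC mul1mx mulmx1 subrr.
by rewrite trmx_mul -mulmxA (mulmxA Q^T) -PQ !mulmxA -mulmxA -trmx_mul PC trmx1 mul1mx.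
Qed.

End GramMatrices.

Section ColumnMatrices.
Variable R : comPzRingType.

Definition cols_mx n m (a : 'I_m -> 'cV[R]_n) : 'M[R]_(n, m) := \matrix_(i, j) a j i 0.

Lemma cols_mx_delta n m (a : 'I_m -> 'cV[R]_n) k : cols_mx a *m delta_mx k 0 = a k.
Proof. by rewrite -colE; apply/matrixP => i j; rewrite !mxE (ord1 j). Qed.

Lemma mulmx_cols_mx p n m (M : 'M[R]_(p, n)) (a : 'I_m -> 'cV[R]_n) :
  M *m cols_mx a = cols_mx (fun k => M *m a k).
Proof. by apply/matrixP => i j; rewrite !mxE; apply: eq_bigr => k _; rewrite !mxE. Qed.

Lemma cols_mx_mulE n m (a : 'I_m -> 'cV[R]_n) (d : 'cV[R]_m) :
  cols_mx a *m d = \sum_k d k 0 *: a k.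
Proof.
apply/matrixP => i j; rewrite (ord1 j) !mxE summxE; apply: eq_bigr => k _.
by rewrite !mxE mulrC.
Qed.

Lemma mulmx_cols_mx_eq n m (A : 'M[R]_n) (a b : 'I_m -> 'cV[R]_n) :
  A *m cols_mx a = cols_mx b -> forall k, A *m a k = b k.
Proof. by move=> Aab k; rewrite -(cols_mx_delta a) -(cols_mx_delta b) mulmxA Aab. Qed.

End ColumnMatrices.

Lemma cols_mx_rinv (F : fieldType) n m (a : 'I_m -> 'cV[F]_n) :
  (<<[seq a i | i <- enum 'I_m]>>)%VS = fullv ->
  exists C : 'M[F]_(m, n), cols_mx a *m C = 1%:M.
Proof.
move=> a_span.
have col_comb j : exists d : 'cV[F]_m, cols_mx a *m d = delta_mx j 0.
  have : delta_mx j 0 \in <<[seq a i | i <- enum 'I_m]>>%VS by rewrite a_span memvf.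
  rewrite span_def big_map big_enum /= => /memv_sumP [vs vs_line vs_sum].
  have /fin_all_exists [c c_eq] i : exists c, vs i = c *: a i.
    exact/vlineP/vs_line.
  exists (\col_i c i); rewrite vs_sum cols_mx_mulE.
  by apply: eq_bigr => i _; rewrite mxE c_eq.
have [D D_eq] := fin_all_exists col_comb.
exists (cols_mx D); rewrite mulmx_cols_mx; apply/matrixP => i j.
by rewrite mxE D_eq !mxE andbT.
Qed.

Section InnerProduct.
Variables (R : realType) (n : nat).
Local Notation V := 'cV[R]_n.
Implicit Types (u v w : V).

Lemma dotvC u v : dotv u v = dotv v u.
Proof. by rewrite /dotv -[in RHS](trmxK u) -trmx_mul [RHS]mxE. Qed.

Lemma dotvDl u v w : dotv (u + v) w = dotv u w + dotv v w.
Proof. by rewrite /dotv linearD mulmxDl mxE. Qed.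

Lemma dotvZl a u w : dotv (a *: u) w = a * dotv u w.
Proof. by rewrite /dotv linearZ /= -scalemxAl [LHS]mxE. Qed.

Lemma dotvBl u v w : dotv (u - v) w = dotv u w - dotv v w.
Proof. by rewrite dotvDl -scaleN1r dotvZl mulN1r. Qed.

Lemma dotvBr u v w : dotv w (u - v) = dotv w u - dotv w v.
Proof. by rewrite !(dotvC w) dotvBl. Qed.

Lemma dotv_suml I (s : seq I) (P : pred I) (F : I -> V) w :
  dotv (\sum_(i <- s | P i) F i) w = \sum_(i <- s | P i) dotv (F i) w.
Proof. by rewrite /dotv linear_sum mulmx_suml summxE. Qed.

Lemma dotv_ge0 v : 0 <= dotv v v.
Proof. by rewrite /dotv mxE sumr_ge0 // => i _; rewrite mxE -expr2 sqr_ge0. Qed.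

Lemma dotv_eq0 v : dotv v v = 0 -> v = 0.
Proof.
by move=> vv0; apply: trmx_mul_self_eq0; apply/matrixP => i j; rewrite !ord1 [RHS]mxE.
Qed.

Lemma dotv_mulmxl (A : 'M[R]_n) u v : dotv (A *m u) v = dotv u (A^T *m v).
Proof. by rewrite /dotv trmx_mul mulmxA. Qed.

Lemma dotv_orthogonal (A : 'M[R]_n) u v :
  A^T *m A = 1%:M -> dotv (A *m u) (A *m v) = dotv u v.
Proof. by move=> AA; rewrite dotv_mulmxl mulmxA AA mul1mx. Qed.

Lemma vnorm_eq u v : (vnorm u = vnorm v) <-> (dotv u u = dotv v v).
Proof.
split=> [|uv]; last by rewrite /vnorm uv.
by move/eqP; rewrite eqr_sqrt ?dotv_ge0 // => /eqP.
Qed.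

Lemma polarization (a b a' b' : V) :
  dotv a a = dotv a' a' -> dotv b b = dotv b' b' ->
  dotv (a - b) (a - b) = dotv (a' - b') (a' - b') -> dotv a b = dotv a' b'.
Proof. by rewrite !dotvBl !dotvBr (dotvC b a) (dotvC b' a'); lra. Qed.

Definition gram m (a : 'I_m -> V) : 'M[R]_m := \matrix_(i, j) dotv (a i) (a j).

Lemma gramE m (a : 'I_m -> V) : gram a = (cols_mx a)^T *m cols_mx a.
Proof.
apply/matrixP => i j; rewrite /gram /dotv !mxE; apply: eq_bigr => k _; by rewrite !mxE.
Qed.

End InnerProduct.

Section OrthogonalProjection.
Variables (R : realType) (n : nat).
Local Notation V := 'cV[R]_n.
Variables (W : {vspace V}) (f : V -> V).
Hypothesis f_proj : is_orth_proj W f.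

Lemma proj_mem v : f v \in W.
Proof. by case: (f_proj v). Qed.

Lemma proj_orth v w : w \in W -> dotv (v - f v) w = 0.
Proof. by case: (f_proj v) => _; apply. Qed.

Lemma proj_unique v a :
  a \in W -> (forall w, w \in W -> dotv (v - a) w = 0) -> f v = a.
Proof.
move=> aW va_orth; apply/eqP; rewrite -subr_eq0; apply/eqP/dotv_eq0.
have dW : f v - a \in W by rewrite rpredB ?proj_mem.
have E : f v - a = (v - a) - (v - f v) by rewrite opprB [RHS]addrC addrA subrK.
by rewrite {1}E dotvBl va_orth ?proj_orth ?subrr.
Qed.

Lemma proj_id x : x \in W -> f x = x.
Proof.
by move=> xW; apply: proj_unique => // w _; rewrite subrr -(scale0r 0) dotvZl mul0r.
Qed.

Lemma proj_eq0 v : (forall w, w \in W -> dotv v w = 0) -> f v = 0.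
Proof.
by move=> v_orth; apply: proj_unique; rewrite ?mem0v // => w; rewrite subr0; apply: v_orth.
Qed.

Lemma dotv_projl v w : w \in W -> dotv (f v) w = dotv v w.
Proof. by move=> wW; apply/eqP; rewrite eq_sym -subr_eq0 -dotvBl proj_orth. Qed.

Lemma proj_linear a u v : f (a *: u + v) = a *: f u + f v.
Proof.
apply: proj_unique => [|w wW]; first by rewrite rpredD ?rpredZ ?proj_mem.
have -> : a *: u + v - (a *: f u + f v) = a *: (u - f u) + (v - f v).
  by rewrite scalerBr opprD addrACA.
by rewrite dotvDl dotvZl !proj_orth // mulr0 addr0.
Qed.

Lemma proj_cols_mx m (a : 'I_m -> V) (d : 'cV[R]_m) :
  f (cols_mx a *m d) = cols_mx (fun k => f (a k)) *m d.
Proof.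
rewrite !cols_mx_mulE; elim/big_rec2: _ => [|k x y _ <-]; first exact/proj_id/mem0v.
by rewrite proj_linear.
Qed.

(* An isometry mapping [W] onto itself also preserves its orthogonal complement. *)
Lemma proj_mulmx (A : 'M[R]_n) :
  A^T *m A = 1%:M -> (forall x, (exists2 w, w \in W & A *m w = x) <-> x \in W) ->
  forall v, f (A *m v) = A *m f v.
Proof.
move=> AA AW v; apply: proj_unique; first by apply/AW; exists (f v); rewrite ?proj_mem.
by move=> _ /AW [w wW <-]; rewrite -mulmxBr dotv_orthogonal // proj_orth.
Qed.

End OrthogonalProjection.

Section OrthogonalDecomposition.
Variables (R : realType) (n r : nat).
Local Notation V := 'cV[R]_n.
Variables (W : 'I_r -> {vspace V}) (proj : 'I_r -> V -> V).
Hypothesis W_orth :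
  forall l1 l2, l1 != l2 -> forall u v, u \in W l1 -> v \in W l2 -> dotv u v = 0.
Hypothesis W_sum : (\sum_(l < r) W l)%VS = fullv.
Hypothesis proj_W : forall l, is_orth_proj (W l) (proj l).

Lemma proj_mem_orth l l' w : l != l' -> w \in W l' -> proj l w = 0.
Proof.
move=> ne wW; apply: (proj_eq0 (proj_W l)) => v vW.
by apply: (W_orth _ wW vW); rewrite eq_sym.
Qed.

(* [v - \sum_l proj l v] is orthogonal to every [W l], hence to their sum, which is
   the whole space. *)
Lemma sum_proj v : \sum_l proj l v = v.
Proof.
apply/esym/eqP; rewrite -subr_eq0; apply/eqP/dotv_eq0; set u := v - _.
have u_orth l w : w \in W l -> dotv u w = 0.
  move=> wW; rewrite dotvBl dotv_suml (bigD1 l) //= (dotv_projl (proj_W l)) //.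
  rewrite big1 ?addr0 ?subrr // => l' ne.
  exact: (W_orth ne (proj_mem (proj_W l') v) wW).
have /memv_sumP [ws ws_W u_eq] : u \in (\sum_(l < r) W l)%VS by rewrite W_sum memvf.
rewrite {1}u_eq dotv_suml big1 // => l _.
by rewrite dotvC (u_orth l) ?ws_W.
Qed.

Lemma dotv_sum_proj u v : dotv u v = \sum_l dotv (proj l u) (proj l v).
Proof.
rewrite -{1}(sum_proj u) dotv_suml; apply: eq_bigr => l _.
by rewrite dotvC -(dotv_projl (proj_W l) v) ?(proj_mem (proj_W l)) // dotvC.
Qed.

Lemma gram_sum_proj m (a : 'I_m -> V) :
  gram a = \sum_l gram (fun k => proj l (a k)).
Proof.
apply/matrixP => i j; rewrite summxE mxE dotv_sum_proj.
by apply: eq_bigr => l _; rewrite mxE.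
Qed.

Lemma mem_of_proj_eq0 l v : (forall l', l' != l -> proj l' v = 0) -> v \in W l.
Proof.
by move=> v_proj; rewrite -(sum_proj v) (bigD1 l) //= big1 ?addr0 ?(proj_mem (proj_W l)).
Qed.

Lemma mulmx_onto (A : 'M[R]_n) :
  A *m A^T = 1%:M -> (forall l w, w \in W l -> A *m w \in W l) ->
  forall l x, (exists2 w, w \in W l & A *m w = x) <-> x \in W l.
Proof.
move=> AA AW l x; split=> [[w wW <-]|xW]; first exact: AW.
exists (A^T *m x); last by rewrite mulmxA AA mul1mx.
apply: mem_of_proj_eq0 => l' ne; apply: (proj_eq0 (proj_W l')) => z zW.
rewrite dotv_mulmxl trmxK; apply: (W_orth _ xW (AW _ _ zW)).
by rewrite eq_sym.
Qed.

(* If [w = P d] lies in [W l], its other projections [proj l' (P d)] vanish; equal Gram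
   matrices of the projected families transport this to [proj l' (A w)]. *)
Lemma mulmx_stable m (a b : 'I_m -> V) (A : 'M[R]_n) (C : 'M[R]_(m, n)) :
  cols_mx a *m C = 1%:M -> A *m cols_mx a = cols_mx b ->
  (forall l, gram (fun k => proj l (a k)) = gram (fun k => proj l (b k))) ->
  forall l w, w \in W l -> A *m w \in W l.
Proof.
move=> aC Aab gram_ab l w wW.
have w_eq : w = cols_mx a *m (C *m w) by rewrite mulmxA aC mul1mx.
apply: mem_of_proj_eq0 => l' ne.
have Pd0 : cols_mx (fun k => proj l' (a k)) *m (C *m w) = 0.
  by rewrite -(proj_cols_mx (proj_W l')) -w_eq (proj_mem_orth ne wW).
rewrite w_eq mulmxA Aab (proj_cols_mx (proj_W l')).
by apply: (gram_mulmx_eq0 _ Pd0); rewrite -!gramE gram_ab.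
Qed.

End OrthogonalDecomposition.

Section InducedAutomorphism.
Variables (R : realType) (n m : nat).
Local Notation V := 'cV[R]_n.
Variables (p : 'I_m -> V) (pi : {perm 'I_m}).

Lemma geom_aut_idx_mulmx (A : 'M[R]_n) :
  A^T *m A = 1%:M -> (forall k, A *m p k = p (pi k)) -> geom_aut_idx p pi.
Proof.
move=> AA Ap i j; rewrite -!Ap -mulmxBr.
by split; apply/vnorm_eq; rewrite dotv_orthogonal.
Qed.

Variable f : V -> V.

Lemma in_proj_set k : f (p k) \in proj_set p f.
Proof. by apply: map_f; rewrite mem_enum. Qed.

Lemma induced_map_proj : respects p f pi ->
  forall k, induced_map p f pi (f (p k)) = f (p (pi k)).
Proof.
move=> pi_resp k; rewrite /induced_map; case: pickP => [k0 /eqP k0k | /(_ k)]; last first.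
  by rewrite eqxx.
have [q' _ pi_class] := pi_resp _ (in_proj_set k).
have /imset_f pik : k \in eq_class p f (f (p k)) by rewrite inE.
have /imset_f pik0 : k0 \in eq_class p f (f (p k)) by rewrite inE k0k.
by move: (pik _ pi) (pik0 _ pi); rewrite pi_class !inE => /eqP -> /eqP ->.
Qed.

Lemma gram_induced : induced_geom_aut p f pi ->
  gram (fun k => f (p (pi k))) = gram (fun k => f (p k)).
Proof.
move=> [pi_resp [_ _ pi_iso]]; apply/matrixP => i j; rewrite !mxE.
have [ii ij] := pi_iso _ _ (in_proj_set i) (in_proj_set j).
have [jj _] := pi_iso _ _ (in_proj_set j) (in_proj_set i).
rewrite !induced_map_proj // in ii ij jj.
by apply/esym/polarization; apply/vnorm_eq.
Qed.

Lemma induced_geom_aut_mulmx (W : {vspace V}) (A : 'M[R]_n) :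
  is_orth_proj W f -> A^T *m A = 1%:M -> (forall k, A *m p k = p (pi k)) ->
  (forall x, (exists2 w, w \in W & A *m w = x) <-> x \in W) ->
  induced_geom_aut p f pi.
Proof.
move=> f_proj AA Ap AW.
have A_inj : injective (fun v : V => A *m v).
  by apply: (can_inj (g := mulmx A^T)) => v; rewrite mulmxA AA mul1mx.
have f_pi k : f (p (pi k)) = A *m f (p k) by rewrite -Ap (proj_mulmx f_proj).
have pi_resp : respects p f pi.
  move=> _ /mapP [k _ ->]; exists (f (p (pi k))); first exact: in_proj_set.
  apply/setP => k'; rewrite -[k' in LHS](permKV pi) mem_imset ?inE; last exact: perm_inj.
  by rewrite -[k' in RHS](permKV pi) !f_pi (inj_eq A_inj).
split=> //; split.
- by move=> _ /mapP [k _ ->]; rewrite induced_map_proj // in_proj_set.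
- move=> _ _ /mapP [k _ ->] /mapP [k' _ ->]; rewrite !induced_map_proj // !f_pi.
  by move/A_inj.
- move=> _ _ /mapP [k _ ->] /mapP [k' _ ->]; rewrite !induced_map_proj // !f_pi.
  by rewrite -mulmxBr; split; apply/vnorm_eq; rewrite dotv_orthogonal.
Qed.

End InducedAutomorphism.

Theorem lemma2 (R : realType) (n m r : nat) (p : 'I_m -> 'cV[R]_n)
  (W : 'I_r -> {vspace 'cV[R]_n}) (proj : 'I_r -> 'cV[R]_n -> 'cV[R]_n)
  (pi : {perm 'I_m}) :
  injective p ->
  (forall i, rational_pt (p i)) ->
  (<<[seq p i | i <- enum 'I_m]>>)%VS = fullv ->
  (forall l1 l2, l1 != l2 -> forall u v, u \in W l1 -> v \in W l2 -> dotv u v = 0) ->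
  (\sum_(l < r) W l)%VS = fullv ->
  (forall l, is_orth_proj (W l) (proj l)) ->
  (geom_aut_idx p pi /\
   exists A : 'M[R]_n,
     [/\ A *m A^T = 1%:M, forall i, A *m p i = p (pi i) &
         forall l x, (exists2 w, w \in W l & A *m w = x) <-> x \in W l])
  <-> (forall l, induced_geom_aut p (proj l) pi).
Proof.
move=> _ _ p_span W_orth W_sum proj_W; split.
  move=> [_ [A [AA Ap AW]]] l.
  exact: (induced_geom_aut_mulmx (proj_W l) (mulmx1C AA) Ap (AW l)).
move=> pi_ind; pose q k := p (pi k).
have [C pC] := cols_mx_rinv p_span.
have gram_pq : gram q = gram p.
  rewrite !(gram_sum_proj W_orth W_sum proj_W); apply: eq_bigr => l _.
  exact: (gram_induced (pi_ind l)).
have gram_mx : (cols_mx p)^T *m cols_mx p = (cols_mx q)^T *m cols_mx q.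
  by rewrite -!gramE gram_pq.
have [A [Apq AA]] := orthogonal_extension pC gram_mx.
have Ap := mulmx_cols_mx_eq Apq.
have AAt := mulmx1C AA.
split; first exact: geom_aut_idx_mulmx Ap.
exists A; split=> //; apply: (mulmx_onto W_orth W_sum proj_W AAt).
apply: (mulmx_stable W_orth W_sum proj_W pC Apq) => l.
by rewrite /q (gram_induced (pi_ind l)).
Qed.
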